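(* For every $\beta\in(0,1]$, every integer $n>2$ and every integer $K$ with $1\le K\le\min\{n-1,e^{1/(5\beta)}\}$, there exists a competing content creation game $\mathcal G=(\{\mathcal S_i\}_{i=1}^n,\mathcal X,\sigma,\beta,K)$ with $n$ players such that $$PoA(\mathcal G)>\frac{n-1}{n}+\frac{1}{1+5\beta\log K}.$$
   Context: A competing content creation game $\mathcal G=(\{\mathcal S_i\}_{i=1}^n,\mathcal X,\sigma,\beta,K)$ consists of: a finite set of users $\mathcal X=\{x_1,\dots,x_m\}\subset\mathbb R^d$; players $i\in[n]$, player $i$ having an action set $\mathcal S_i\subset\mathbb R^d$; a relevance function $\sigma:\mathbb R^d\times\mathbb R^d\to[0,1]$; a noise parameter $\beta>0$; and an integer $1\le K\le n$. Let $\mathcal S=\prod_i\mathcal S_i$. For $s=(s_1,\dots,s_n)\in\mathcal S$ and user $x_j$, $\mathcal T_j(s;K)$ is the set of the first $K$ players of an ordering of $[n]$ by non-increasing $\sigma(s_i,x_j)$ (ties broken uniformly at random). Let $\varepsilon_1,\dots,\varepsilon_n$ be i.i.d. Gumbel with location $-\beta\gamma$ and scale $\beta$ (CDF $t\mapsto\exp(-e^{-(t+\beta\gamma)/\beta})$, $\gamma$ the Euler–Mascheroni constant). User $j$ chooses $i_j^*=\arg\max_{i\in\mathcal T_j(s;K)}\{\sigma(s_i,x_j)+\varepsilon_i\}$; $x_j\to s_i$ denotes the event $i_j^*=i$. User utility $\pi_j(s)=\mathbb E[\max_{i\in\mathcal T_j(s;K)}\{\sigma(s_i,x_j)+\varepsilon_i\}]$;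 player utility $u_i(s)=\sum_j\mathbb E[\sigma(s_i,x_j)+\varepsilon_i\mid x_j\to s_i]\Pr[x_j\to s_i]$; welfare $W(s)=\sum_j\pi_j(s)$. A CCE is a distribution $\alpha$ on $\mathcal S$ with $\mathbb E_{s\sim\alpha}[u_i(s)]\ge\mathbb E_{s\sim\alpha}[u_i(s_i',s_{-i})]$ for all $i$ and $s_i'\in\mathcal S_i$. $PoA(\mathcal G)=\max_{s\in\mathcal S}W(s)\big/\min_{\alpha\in CCE(\mathcal G)}\mathbb E_{s\sim\alpha}[W(s)]$. *)

From Stdlib Require List.
From HB Require Import structures.
From mathcomp Require Import all_boot all_order all_algebra.
From mathcomp Require Import boolp classical_sets reals.
From mathcomp Require Import sequences exp.
Set Implicit Arguments. Unset Strict Implicit. Unset Printing Implicit Defensive.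
Import Order.TTheory GRing.Theory Num.Theory.
Local Open Scope ring_scope.
Local Open Scope classical_set_scope.

Record game (R : realType) (n d : nat) := Game {
  g_acts  : 'I_n -> seq 'rV[R]_d;
  g_users : seq 'rV[R]_d;
  g_sigma : 'rV[R]_d -> 'rV[R]_d -> R;
  g_beta  : R;
  g_K     : nat }.

Definition valid_game (R : realType) (n d : nat) (G : game R n d) : Prop :=
  [/\ forall i, g_acts G i != [::],
      uniq (g_users G),
      forall a b, 0 <= g_sigma G a b <= 1,
      0 < g_beta G &
      (1 <= g_K G <= n)%N ].

Definition profile (R : realType) (n d : nat) := 'I_n -> 'rV[R]_d.

Definition in_profiles (R : realType) (n d : nat) (G : game R n d)
  (s : profile R n d) : Prop := forall i, s i \in g_acts G i.

Definition deviate (R : realType) (n d : nat) (s : profile R n d) (i : 'I_n)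
  (a : 'rV[R]_d) : profile R n d := fun k => if k == i then a else s k.

Section Utilities.
Variables (R : realType) (n d : nat) (G : game R n d).

Definition rel (s : profile R n d) (x : 'rV[R]_d) (k : 'I_n) : R :=
  g_sigma G (s k) x.

(* Pr[i \in T_x(s;K)] under uniform random tie-breaking:
   a = #players strictly more relevant, b = #players equally relevant
   (including i); then i is in the top K with probability
   clamp((K - a)/b, 0, 1). *)
Definition prob_top (s : profile R n d) (x : 'rV[R]_d) (i : 'I_n) : R :=
  let a := #|[pred k : 'I_n | rel s x i < rel s x k]| in
  let b := #|[pred k : 'I_n | rel s x k == rel s x i]| in
  Num.min 1 (Num.max 0 (((g_K G)%:R - a%:R) / b%:R)).

(* sum over the top-K set of exp(sigma/beta); deterministic, since tied
   players have equal relevance *)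
Definition Zsum (s : profile R n d) (x : 'rV[R]_d) : R :=
  \sum_(k < n) prob_top s x k * expR (rel s x k / g_beta G).

(* user utility pi_x(s) = E[max_{i in T} sigma_i + eps_i] for Gumbel noise
   with location -beta*gamma and scale beta *)
Definition user_util (s : profile R n d) (x : 'rV[R]_d) : R :=
  g_beta G * ln (Zsum s x).

(* Pr[x -> s_i] (logit choice among the top-K set) *)
Definition choice_prob (s : profile R n d) (x : 'rV[R]_d) (i : 'I_n) : R :=
  prob_top s x i * expR (rel s x i / g_beta G) / Zsum s x.

(* E[sigma_i + eps_i | x -> s_i] = E[max] for Gumbel noise, hence
   u_i(s) = sum_x Pr[x -> s_i] * pi_x(s) *)
Definition player_util (s : profile R n d) (i : 'I_n) : R :=
  \sum_(x <- g_users G) choice_prob s x i * user_util s x.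

Definition welfare (s : profile R n d) : R :=
  \sum_(x <- g_users G) user_util s x.

Definition dist := seq (R * profile R n d).

Definition expect (al : dist) (f : profile R n d -> R) : R :=
  \sum_(p <- al) p.1 * f p.2.

Definition is_dist (al : dist) : Prop :=
  (forall p, List.In p al -> 0 <= p.1 /\ in_profiles G p.2) /\
  \sum_(p <- al) p.1 = 1.

Definition is_CCE (al : dist) : Prop :=
  is_dist al /\
  forall (i : 'I_n) (a : 'rV[R]_d), a \in g_acts G i ->
    expect al (fun s => player_util (deviate s i a) i)
      <= expect al (fun s => player_util s i).

(* PoA = max_s W(s) / min_{alpha CCE} E_alpha[W]  (max / min are attained in
   finite games, so sup / inf coincide with them) *)
Definition PoA : R :=
  sup [set welfare s | s in in_profiles G] /
  inf [set expect al welfare | al in is_CCE].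

End Utilities.

From Pilot Require Import Defs.
From mathcomp Require Import all_boot all_order all_algebra.
From mathcomp Require Import boolp classical_sets reals.
From mathcomp Require Import sequences exp.
From mathcomp Require Import ring lra.
Import Order.TTheory GRing.Theory Num.Theory.
Set Implicit Arguments. Unset Strict Implicit. Unset Printing Implicit Defensive.
Local Open Scope ring_scope.

(* Take n mainstream users, who rate a common mainstream content
   at 1 and every niche content at 1 - 1/(n+1), and n niche users, each of
   whom only values the niche content of one player.  Write c = beta ln K.
   If everybody plays mainstream, all players tie for every user, the welfare
   is n (2c + 1), and this is a pure Nash equilibrium, hence a CCE: a player
   switching to its niche content falls behind the K <= n - 1 others for every
   mainstream user and only gains its own niche user.  If everybody plays
   niche, the welfare is at least n (c + 2 - 1/(n+1)).  As every profile has
   welfare at least n (1 - 1/(n+1)) > 0, the PoA is at least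
   (c + 2 - 1/(n+1)) / (2c + 1), which beats (n-1)/n + 1/(1 + 5c) as soon as
   c <= 1/5, i.e. K <= exp (1/(5 beta)). *)

Lemma clamp_share_mul_ge1 (R : realFieldType) (k t : R) :
  1 <= k -> 1 <= t -> 1 <= Num.min 1 (Num.max 0 (k / t)) * t.
Proof.
move=> k_ge1 t_ge1; have t_gt0 : 0 < t by lra.
rewrite (max_idPr (divr_ge0 _ _)) ?(ltW t_gt0) //; last by lra.
have [share_ge1|share_lt1] := leP 1 (k / t); first by rewrite mul1r.
by rewrite divfK ?gt_eqF.
Qed.

Lemma mul_ln_le (R : realType) (beta x y : R) :
  0 < beta -> 0 < x -> x <= expR (y / beta) -> beta * ln x <= y.
Proof.
move=> beta_gt0 x_gt0 x_le; rewrite mulrC -ler_pdivlMr //.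
by rewrite -[X in _ <= X]expRK ler_ln ?posrE ?expR_gt0.
Qed.

Lemma PoA_bound_gap (R : realFieldType) (c N : R) :
  0 <= c -> c <= 1 / 5 -> 3 <= N ->
  (N - 1) / N + 1 / (1 + 5 * c) < (c + 2 - (N + 1)^-1) / (2 * c + 1).
Proof.
move=> c_ge0 c_le N_ge3.
have N_neq0 : N != 0 by rewrite gt_eqF //; lra.
have N1_neq0 : N + 1 != 0 by rewrite gt_eqF //; lra.
have c2_neq0 : 2 * c + 1 != 0 by rewrite gt_eqF //; lra.
have c5_neq0 : 1 + 5 * c != 0 by rewrite gt_eqF //; lra.
rewrite -subr_gt0.
have -> : (c + 2 - (N + 1)^-1) / (2 * c + 1) - ((N - 1) / N + 1 / (1 + 5 * c))
    = c * (2 - 5 * c) / ((2 * c + 1) * (1 + 5 * c))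
      + (2 * c * N + 2 * c + 1) / ((N + 1) * N * (2 * c + 1)).
  by field; rewrite N_neq0 N1_neq0 c2_neq0 c5_neq0.
apply: ltr_wpDl.
  by apply: divr_ge0; apply: mulr_ge0; lra.
by apply: divr_gt0; [nra | apply: mulr_gt0; [apply: mulr_gt0|]; lra].
Qed.

Section GameFacts.
Variables (R : realType) (n d : nat) (G : game R n d).
Hypotheses (beta_gt0 : 0 < g_beta G) (K_range : (1 <= g_K G <= n)%N).
Hypothesis sigma_range : forall a x, 0 <= g_sigma G a x <= 1.

Local Notation beta := (g_beta G).
Local Notation K := (g_K G).
Local Notation rel := (Defs.rel G).

Lemma K_gt0 : (0 < K)%N. Proof. by case/andP: K_range. Qed.
Lemma n_gt0 : (0 < n)%N. Proof. by case/andP: K_range; apply: leq_trans. Qed.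

Lemma prob_top_ge0 s x k : 0 <= prob_top G s x k.
Proof. by rewrite /prob_top le_min ler01 le_max lexx. Qed.

Lemma prob_top_le1 s x k : prob_top G s x k <= 1.
Proof. by rewrite /prob_top ge_min lexx. Qed.

Lemma Zsum_term_ge0 s x k : 0 <= prob_top G s x k * expR (rel s x k / beta).
Proof. by rewrite mulr_ge0 ?prob_top_ge0 ?expR_ge0. Qed.

Lemma Zsum_ge_term s x i :
  prob_top G s x i * expR (rel s x i / beta) <= Zsum G s x.
Proof.
rewrite /Zsum (bigD1 i) //= lerDl; apply: sumr_ge0 => k _; exact: Zsum_term_ge0.
Qed.

Lemma prob_top_max s x k : (forall j, rel s x j <= rel s x k) ->
  prob_top G s x k =
    Num.min 1 (Num.max 0 (K%:R / #|[pred j | rel s x j == rel s x k]|%:R)).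
Proof.
move=> k_max; rewrite /prob_top.
have -> : #|[pred j : 'I_n | rel s x k < rel s x j]| = 0%N.
  by apply: eq_card0 => j; rewrite inE ltNge k_max.
by rewrite subr0.
Qed.

(* The inclusion probabilities of the players tied at maximal relevance sum to
   at least 1, so their terms alone reach the largest exponential. *)
Lemma expR_rel_le_Zsum s x k0 : expR (rel s x k0 / beta) <= Zsum G s x.
Proof.
have [k _ k_max] :=
  @Order.TotalTheory.arg_maxP _ _ 'I_n k0 predT (rel s x) isT.
set T := [pred j | rel s x j == rel s x k].
have T_ge1 : (1 <= #|T|)%N by apply/card_gt0P; exists k; rewrite inE.
have {}k_max j : rel s x j <= rel s x k := k_max j isT.
pose p : R := Num.min 1 (Num.max 0 (K%:R / #|T|%:R)).
have probT j : j \in T -> prob_top G s x j = p.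
  move=> /eqP jT; rewrite prob_top_max; first by rewrite jT.
  by move=> i; rewrite jT.
apply: (@le_trans _ _ (\sum_(j < n | j \in T) p * expR (rel s x k / beta))).
  rewrite sumr_const -mulr_natr mulrAC.
  apply: (@le_trans _ _ (expR (rel s x k / beta))).
    by rewrite ler_expR ler_pM2r ?invr_gt0 ?k_max.
  rewrite ler_peMl ?expR_ge0 //.
  by rewrite clamp_share_mul_ge1 ?ler1n ?K_gt0.
rewrite /Zsum [X in _ <= X](bigID (mem T)) /= -[X in X <= _]addr0; apply: lerD.
  by apply: ler_sum => j jT; rewrite probT //; move/eqP: jT => ->.
by apply: sumr_ge0 => j _; exact: Zsum_term_ge0.
Qed.

Lemma Zsum_gt0 s x : 0 < Zsum G s x.
Proof. exact: lt_le_trans (expR_gt0 _) (expR_rel_le_Zsum s x (Ordinal n_gt0)). Qed.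

Lemma rel_le_user_util s x k : rel s x k <= user_util G s x.
Proof.
rewrite /user_util -ler_pdivrMl // -[X in X <= _]expRK.
by rewrite ler_ln ?posrE ?expR_gt0 ?Zsum_gt0 // mulrC expR_rel_le_Zsum.
Qed.

Lemma user_util_le_ln s x (B : R) : Zsum G s x <= B -> user_util G s x <= beta * ln B.
Proof.
move=> ZB; rewrite /user_util; apply: ler_wpM2l; first exact: ltW.
by rewrite ler_ln ?posrE ?Zsum_gt0 // (lt_le_trans (Zsum_gt0 s x)).
Qed.

Lemma choice_prob_le1 s x i : choice_prob G s x i <= 1.
Proof. by rewrite /choice_prob ler_pdivrMr ?Zsum_gt0 // mul1r Zsum_ge_term. Qed.

Lemma choice_prob_eq0 s x i :
  (K <= #|[pred k | (rel s x i < rel s x k)%R]|)%N -> choice_prob G s x i = 0.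
Proof.
move=> K_le; rewrite /choice_prob /prob_top (max_idPl _) ?min_r ?ler01 ?mul0r //.
by rewrite mulr_le0_ge0 ?invr_ge0 // subr_le0 ler_nat.
Qed.

Lemma user_util_le s x : user_util G s x <= beta * ln n%:R + 1.
Proof.
have -> : beta * ln n%:R + 1 = beta * ln (n%:R * expR (1 / beta)).
  rewrite lnM ?posrE ?expR_gt0 ?ltr0n ?n_gt0 // expRK mulrDr.
  by rewrite mulrCA mulfV ?mulr1 ?gt_eqF.
apply: user_util_le_ln; rewrite -[n in n%:R]card_ord mulr_natl -sumr_const.
apply: ler_sum => k _; rewrite -[X in _ <= X]mul1r ler_pM ?prob_top_ge0 ?expR_ge0 //.
  exact: prob_top_le1.
rewrite ler_expR ler_pM2r ?invr_gt0 //; by case/andP: (sigma_range (s k) x).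
Qed.

Section SingleBest.
Variables (s : profile R n d) (x : 'rV[R]_d) (i : 'I_n) (r r' : R).
Hypotheses (rel_best : rel s x i = r) (rel_others : forall k, k != i -> rel s x k = r').
Hypotheses (r'_lt_r : r' < r) (n_gt1 : (1 < n)%N).

Lemma card_others : #|[pred k : 'I_n | k != i]| = n.-1.
Proof.
by rewrite -[n in n.-1]card_ord -(cardC1 i); apply: eq_card => k; rewrite !inE.
Qed.

(* The best player always takes one of the K slots, the n - 1 others tie. *)
Lemma prob_top_others k : k != i -> prob_top G s x k <= (K%:R - 1) / n.-1%:R.
Proof.
move=> k_neq_i; rewrite /prob_top ge_min; apply/orP; right.
set a := #|_|; set b := #|_|.
have a_ge1 : (1 <= a)%N.
  by apply/card_gt0P; exists i; rewrite inE rel_best rel_others.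
have b_ge : (n.-1 <= b)%N.
  rewrite -card_others; apply: subset_leq_card; apply/fintype.subsetP => j.
  by rewrite !inE => j_neq_i; rewrite !rel_others.
have n1_gt0 : (0 : R) < n.-1%:R by rewrite ltr0n -ltnS prednK // ltnW.
have q_ge0 : (0 : R) <= (K%:R - 1) / n.-1%:R.
  by rewrite divr_ge0 ?(ltW n1_gt0) // subr_ge0 ler1n K_gt0.
rewrite ge_max q_ge0 /=.
apply: (@le_trans _ _ ((K%:R - 1) / b%:R)).
  by rewrite ler_wpM2r ?invr_ge0 // lerD2l lerN2 ler1n.
rewrite ler_wpM2l ?subr_ge0 ?ler1n ?K_gt0 //.
by rewrite lef_pV2 ?posrE ?ler_nat // (lt_le_trans n1_gt0) ?ler_nat.
Qed.

Lemma Zsum_single_best :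
  Zsum G s x <= expR (r / beta) + (K%:R - 1) * expR (r' / beta).
Proof.
rewrite /Zsum (bigD1 i) //=; apply: lerD.
  by rewrite rel_best ler_piMl ?expR_ge0 ?prob_top_le1.
apply: (@le_trans _ _ (\sum_(k < n | k != i) (K%:R - 1) / n.-1%:R * expR (r' / beta))).
  apply: ler_sum => k k_neq_i; rewrite rel_others //.
  by rewrite ler_wpM2r ?expR_ge0 ?prob_top_others.
rewrite sumr_const card_others -[_ *+ n.-1]mulr_natr mulrAC divfK //.
by rewrite pnatr_eq0 -lt0n -ltnS prednK // ltnW.
Qed.

End SingleBest.

Section AllTied.
Variables (s : profile R n d) (x : 'rV[R]_d) (r : R).
Hypothesis rel_tied : forall k, rel s x k = r.

Lemma prob_top_tied k : prob_top G s x k = K%:R / n%:R.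
Proof.
rewrite prob_top_max => [|j]; last by rewrite !rel_tied.
have -> : #|[pred j | rel s x j == rel s x k]| = n.
  by rewrite -[RHS]card_ord; apply: eq_card => j; rewrite !inE !rel_tied eqxx.
rewrite (max_idPr _) ?divr_ge0 // (min_idPr _) //.
by rewrite ler_pdivrMr ?ltr0n ?n_gt0 // mul1r ler_nat; case/andP: K_range.
Qed.

Lemma Zsum_tied : Zsum G s x = K%:R * expR (r / beta).
Proof.
rewrite /Zsum (eq_bigr (fun _ => K%:R / n%:R * expR (r / beta))); last first.
  by move=> k _; rewrite prob_top_tied rel_tied.
rewrite sumr_const card_ord -mulr_natl.
have n_neq0 : n%:R != 0 :> R by rewrite pnatr_eq0 -lt0n n_gt0.
by field.
Qed.

Lemma user_util_tied : user_util G s x = beta * ln K%:R + r.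
Proof.
rewrite /user_util Zsum_tied lnM ?posrE ?expR_gt0 ?ltr0n ?K_gt0 // expRK.
by rewrite mulrDr mulrCA divff ?mulr1 // gt_eqF.
Qed.

Lemma choice_prob_tied k : choice_prob G s x k = n%:R^-1.
Proof.
rewrite /choice_prob Zsum_tied prob_top_tied rel_tied.
have K_neq0 : K%:R != 0 :> R by rewrite pnatr_eq0 -lt0n K_gt0.
have n_neq0 : n%:R != 0 :> R by rewrite pnatr_eq0 -lt0n n_gt0.
have e_neq0 : expR (r / beta) != 0 by rewrite gt_eqF ?expR_gt0.
by field; rewrite K_neq0 e_neq0 n_neq0.
Qed.

End AllTied.

Lemma welfare_le s : welfare G s <= \sum_(x <- g_users G) (beta * ln n%:R + 1).
Proof. by apply: ler_sum => x _; exact: user_util_le. Qed.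

Lemma expect_ge (al : dist R n d) (f : profile R n d -> R) (m : R) :
  (forall p, List.In p al -> 0 <= p.1 /\ in_profiles G p.2) ->
  (forall s, in_profiles G s -> m <= f s) ->
  (\sum_(p <- al) p.1) * m <= expect al f.
Proof.
move=> al_ok f_ge; rewrite /expect mulr_suml.
elim: al al_ok => [|p al IH] al_ok; first by rewrite !big_nil.
rewrite !big_cons; apply: lerD; last by apply: IH => q q_in; apply: al_ok; right.
have [p_ge0 p_prof] := al_ok p (or_introl erefl).
by apply: ler_wpM2l => //; exact: f_ge.
Qed.

Lemma is_CCE_pure s : in_profiles G s ->
  (forall i a, a \in g_acts G i ->
     player_util G (deviate s i a) i <= player_util G s i) ->
  is_CCE G [:: (1, s)].
Proof.
move=> s_prof s_NE; split.
  split; last by rewrite big_seq1.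
  by move=> p [<-|[]]; split; first exact: ler01.
by move=> i a a_in; rewrite /expect !big_seq1 !mul1r; exact: s_NE.
Qed.

Lemma PoA_ge_ratio s al (m : R) : in_profiles G s -> is_CCE G al -> 0 < m ->
  (forall s', in_profiles G s' -> m <= welfare G s') ->
  welfare G s / expect al (welfare G) <= PoA G.
Proof.
move=> s_prof al_CCE m_gt0 W_ge.
set S := [set welfare G s | s in in_profiles G]%classic.
set E := [set expect al (welfare G) | al in is_CCE G]%classic.
have E_ge al' : is_CCE G al' -> m <= expect al' (welfare G).
  by case=> [[al'_ok al'_sum1] _]; rewrite -[m]mul1r -al'_sum1; exact: expect_ge.
have inf_ge : m <= inf E.
  apply: lb_le_inf; first by exists (expect al (welfare G)), al.
  by move=> y [al' al'_CCE <-]; exact: E_ge.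
have inf_le : inf E <= expect al (welfare G).
  apply: ge_inf; last by exists al.
  by exists m => y [al' al'_CCE <-]; exact: E_ge.
have sup_ge : welfare G s <= sup S.
  apply: ub_le_sup; last by exists s.
  exists (\sum_(x <- g_users G) (beta * ln n%:R + 1)).
  by move=> y [s' _ <-]; exact: welfare_le.
have W_ge0 : 0 <= welfare G s by apply: le_trans (W_ge s s_prof); exact: ltW.
have inf_gt0 : 0 < inf E by exact: lt_le_trans inf_ge.
rewrite /PoA -/S -/E; apply: (@le_trans _ _ (welfare G s / inf E)).
  by rewrite ler_wpM2l // lef_pV2 ?posrE // (lt_le_trans inf_gt0).
by rewrite ler_wpM2r // invr_ge0 ltW.
Qed.

End GameFacts.

Section LowerBoundGame.
Variables (R : realType) (n K : nat) (beta : R).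

Definition point (k : nat) : 'rV[R]_1 := const_mx k%:R.

Definition eps : R := n.+1%:R^-1.

(* Users [point j], j < n, are mainstream: they rate the mainstream content
   [point 0] at 1 and every niche content [point i.+1] at [1 - eps].  User
   [point (n + j)] only values the niche content [point j.+1] of player j. *)
Definition lb_sigma (a x : 'rV[R]_1) : R :=
  if x 0 0 < n%:R then (if a 0 0 == 0 then 1 else 1 - eps)
  else (if a 0 0 == x 0 0 - n%:R + 1 then 1 else 0).

Definition lb_game : game R n 1 :=
  Game (fun i => [:: point 0; point i.+1]) (map point (iota 0 (n + n)))
    lb_sigma beta K.

Lemma point00 k : point k 0 0 = k%:R. Proof. by rewrite mxE. Qed.

Lemma eps_gt0 : 0 < eps. Proof. by rewrite invr_gt0 ltr0n. Qed.

Lemma eps_le1 : eps <= 1. Proof. by rewrite invf_le1 ?ler1n ?ltr0n. Qed.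

Lemma lb_sigma_range a x : 0 <= lb_sigma a x <= 1.
Proof.
have := eps_gt0; have := eps_le1; rewrite /lb_sigma => ? ?.
by case: ifP => _; case: ifP => _; rewrite ?ler01 ?lexx //; apply/andP; lra.
Qed.

Lemma lb_sigma_main_main j : (j < n)%N -> lb_sigma (point 0) (point j) = 1.
Proof. by move=> j_lt; rewrite /lb_sigma !point00 ltr_nat j_lt eqxx. Qed.

Lemma lb_sigma_niche_main i j :
  (j < n)%N -> lb_sigma (point i.+1) (point j) = 1 - eps.
Proof. by move=> j_lt; rewrite /lb_sigma !point00 ltr_nat j_lt pnatr_eq0. Qed.

Lemma lb_sigma_on_main_ge a j : (j < n)%N -> 1 - eps <= lb_sigma a (point j).
Proof.
move=> j_lt; have := eps_gt0; rewrite /lb_sigma point00 ltr_nat j_lt => ?.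
by case: ifP => _; lra.
Qed.

Lemma niche_offset j : (n + j)%:R - n%:R + 1 = j.+1%:R :> R.
Proof. by rewrite natrD -addn1 natrD; ring. Qed.

Lemma lb_sigma_main_niche j : lb_sigma (point 0) (point (n + j)) = 0.
Proof.
by rewrite /lb_sigma !point00 ltr_nat ltnNge leq_addr /= niche_offset eq_sym pnatr_eq0.
Qed.

Lemma lb_sigma_niche_niche i j :
  lb_sigma (point i.+1) (point (n + j)) = (i == j)%:R.
Proof.
rewrite /lb_sigma !point00 ltr_nat ltnNge leq_addr /= niche_offset eqr_nat eqSS.
by case: eqP.
Qed.

Lemma sum_lb_users (f : 'rV[R]_1 -> R) :
  \sum_(x <- g_users lb_game) f x
    = \sum_(j < n) f (point j) + \sum_(j < n) f (point (n + j)).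
Proof.
have iota_ord (F : nat -> R) : \sum_(j <- iota 0 n) F j = \sum_(j < n) F j.
  by rewrite -(big_mkord xpredT) /index_iota subn0.
rewrite big_map iotaD big_cat /= iota_ord; congr (_ + _).
by rewrite -[n in iota n]addn0 iotaDl big_map iota_ord.
Qed.

End LowerBoundGame.

Section LowerBoundAnalysis.
Variables (R : realType) (n K : nat) (beta : R).
Hypotheses (beta_gt0 : 0 < beta) (n_gt2 : (2 < n)%N).
Hypotheses (K_ge1 : (1 <= K)%N) (K_lt_n : (K <= n.-1)%N).

Local Notation G := (@lb_game R n K beta).

Local Notation point := (@point R).
Local Notation eps := (@eps R n).
Local Notation c := (beta * ln (K%:R : R)).

Lemma lb_K_range : (1 <= g_K G <= n)%N.
Proof. by rewrite /= K_ge1 (leq_trans K_lt_n) ?leq_pred. Qed.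

Lemma lb_game_valid : valid_game G.
Proof.
split => //=; last exact: lb_K_range; last exact: lb_sigma_range.
rewrite map_inj_uniq ?iota_uniq // => j k /(congr1 (fun v : 'rV[R]_1 => v 0 0)).
by rewrite !point00 => /eqP; rewrite eqr_nat => /eqP.
Qed.

Let lb_beta_gt0 : 0 < g_beta G := beta_gt0.

Definition all_main : profile R n 1 := fun=> point 0.
Definition all_niche : profile R n 1 := fun i => point i.+1.

Lemma c_ge0 : 0 <= c.
Proof. by rewrite mulr_ge0 ?(ltW beta_gt0) // ln_ge0 // ler1n. Qed.

Lemma n_neq0 : n%:R != 0 :> R.
Proof. by rewrite pnatr_eq0 -lt0n (ltn_trans _ n_gt2). Qed.

Lemma sum_const_n (a : R) : \sum_(j < n) a = n%:R * a.
Proof. by rewrite sumr_const card_ord mulr_natl. Qed.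

Lemma welfare_all_main : welfare G all_main = n%:R * (2 * c + 1).
Proof.
rewrite /welfare sum_lb_users.
rewrite (eq_bigr (fun=> c + 1)) => [|j _]; last first.
  rewrite (user_util_tied lb_beta_gt0 lb_K_range (r := 1)) // => k.
  by rewrite /= lb_sigma_main_main.
rewrite [X in _ + X](eq_bigr (fun=> c)) => [|j _]; last first.
  rewrite (user_util_tied lb_beta_gt0 lb_K_range (r := 0)) ?addr0 // => k.
  by rewrite /= lb_sigma_main_niche.
by rewrite !sum_const_n; ring.
Qed.

Lemma player_util_all_main i : player_util G all_main i = 2 * c + 1.
Proof.
rewrite /player_util sum_lb_users.
rewrite (eq_bigr (fun=> n%:R^-1 * (c + 1))) => [|j _]; last first.
  have rel_1 k : Defs.rel G all_main (point j) k = 1 by rewrite /= lb_sigma_main_main.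
  rewrite (choice_prob_tied lb_K_range rel_1).
  by rewrite (user_util_tied lb_beta_gt0 lb_K_range rel_1).
rewrite [X in _ + X](eq_bigr (fun=> n%:R^-1 * c)) => [|j _]; last first.
  have rel_0 k : Defs.rel G all_main (point (n + j)) k = 0.
    by rewrite /= lb_sigma_main_niche.
  rewrite (choice_prob_tied lb_K_range rel_0).
  by rewrite (user_util_tied lb_beta_gt0 lb_K_range rel_0) addr0.
by rewrite !sum_const_n !mulrA mulfV ?n_neq0 //; ring.
Qed.

Section Deviation.
Variable i : 'I_n.

Local Notation s := (deviate all_main i (point i.+1)).

Lemma rel_deviate x k :
  Defs.rel G s x k = lb_sigma n (if k == i then point i.+1 else point 0) x.
Proof. by rewrite /Defs.rel /deviate /=; case: ifP. Qed.

Lemma choice_prob_deviate_main j : (j < n)%N -> choice_prob G s (point j) i = 0.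
Proof.
move=> j_lt; apply: choice_prob_eq0; apply: leq_trans K_lt_n _.
rewrite -(card_others i); apply: subset_leq_card; apply/fintype.subsetP => k.
rewrite !inE => k_neq_i; rewrite !rel_deviate eqxx (negbTE k_neq_i).
by rewrite lb_sigma_niche_main // lb_sigma_main_main // gtrBl eps_gt0.
Qed.

Lemma user_util_deviate_niche : user_util G s (point (n + i)) <= c + 1.
Proof.
have rel_i : Defs.rel G s (point (n + i)) i = 1.
  by rewrite rel_deviate eqxx lb_sigma_niche_niche eqxx.
have rel_k k : k != i -> Defs.rel G s (point (n + i)) k = 0.
  by move=> k_neq_i; rewrite rel_deviate (negbTE k_neq_i) lb_sigma_main_niche.
have := Zsum_single_best lb_K_range rel_i rel_k ltr01 (ltnW n_gt2).
rewrite mul0r expR0 mulr1 /= => Zle.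
apply: le_trans (user_util_le_ln lb_beta_gt0 lb_K_range Zle) _.
have K_pos : (1 : R) <= K%:R by rewrite ler1n.
have e_ge1 : 1 <= expR (1 / beta).
  by rewrite -[X in X <= _]expR0 ler_expR divr_ge0 ?(ltW beta_gt0).
have -> : c + 1 = beta * ln (K%:R * expR (1 / beta)).
  rewrite lnM ?posrE ?expR_gt0 ?(lt_le_trans ltr01) // expRK mulrDr.
  by rewrite mulrCA mulfV ?mulr1 ?gt_eqF.
apply: ler_wpM2l; first exact: ltW.
rewrite ler_ln ?posrE ?mulr_gt0 ?(lt_le_trans ltr01) //; first by nra.
lra.
Qed.

Lemma player_util_deviate : player_util G s i <= 2 * c + 1.
Proof.
rewrite /player_util sum_lb_users big1 => [|j _]; last first.
  by rewrite choice_prob_deviate_main ?mul0r.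
rewrite add0r.
have own : choice_prob G s (point (n + i)) i * user_util G s (point (n + i)) <= c + 1.
  have util_ge0 : 0 <= user_util G s (point (n + i)).
    apply: le_trans (rel_le_user_util lb_beta_gt0 lb_K_range _ _ i).
    by rewrite rel_deviate eqxx lb_sigma_niche_niche eqxx.
  apply: le_trans user_util_deviate_niche.
  by rewrite ler_piMl ?(choice_prob_le1 lb_beta_gt0 lb_K_range).
have others : \sum_(j < n | j != i)
    choice_prob G s (point (n + j)) i * user_util G s (point (n + j)) <= c.
  rewrite (eq_bigr (fun=> n%:R^-1 * c)) => [|j j_neq_i]; last first.
    have rel_0 k : Defs.rel G s (point (n + j)) k = 0.
      rewrite rel_deviate; case: eqP => [_|_]; last exact: lb_sigma_main_niche.
      by rewrite lb_sigma_niche_niche eq_sym (negbTE j_neq_i : (j == i :> nat) = false).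
    rewrite (choice_prob_tied lb_K_range rel_0).
    by rewrite (user_util_tied lb_beta_gt0 lb_K_range rel_0) addr0.
  have total := sum_const_n (n%:R^-1 * c).
  rewrite mulVKf ?n_neq0 // (bigD1 i) //= in total.
  have : 0 <= n%:R^-1 * c by rewrite mulr_ge0 ?invr_ge0 ?c_ge0.
  lra.
rewrite (bigD1 i) //=; lra.
Qed.

End Deviation.

Lemma all_main_CCE : is_CCE G [:: (1, all_main)].
Proof.
apply: is_CCE_pure => [j|j a]; first by rewrite inE eqxx.
rewrite !inE => /orP[/eqP->|/eqP->]; last first.
  by rewrite player_util_all_main player_util_deviate.
have -> // : deviate all_main j (point 0) = all_main.
by apply: funext => k; rewrite /deviate; case: ifP.
Qed.

Lemma all_niche_in_profiles : in_profiles G all_niche.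
Proof. by move=> i; rewrite !inE eqxx orbT. Qed.

Lemma welfare_ge s : n%:R * (1 - eps) <= welfare G s.
Proof.
pose k0 : 'I_n := Ordinal (n_gt0 lb_K_range).
have rel_le x := rel_le_user_util lb_beta_gt0 lb_K_range s x k0.
rewrite /welfare sum_lb_users -[X in X <= _]addr0 -sum_const_n; apply: lerD.
  by apply: ler_sum => j _; apply: le_trans (rel_le _); exact: lb_sigma_on_main_ge.
apply: sumr_ge0 => j _; apply: le_trans (rel_le _).
by case/andP: (lb_sigma_range n (s k0) (point (n + j))).
Qed.

Lemma welfare_all_niche_ge : n%:R * (c + 2 - eps) <= welfare G all_niche.
Proof.
have -> : n%:R * (c + 2 - eps) = n%:R * (c + (1 - eps)) + n%:R * 1 by ring.
rewrite /welfare sum_lb_users -!sum_const_n; apply: lerD; apply: ler_sum => j _.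
  rewrite (user_util_tied lb_beta_gt0 lb_K_range (r := 1 - eps)) // => k.
  exact: lb_sigma_niche_main.
apply: le_trans (rel_le_user_util lb_beta_gt0 lb_K_range _ _ j).
by rewrite /= lb_sigma_niche_niche eqxx.
Qed.

Lemma PoA_lb_game_ge : (c + 2 - eps) / (2 * c + 1) <= PoA G.
Proof.
have eps_lt1 : eps < 1 by rewrite invf_lt1 ?ltr0n // ltr1n ltnS (ltn_trans _ n_gt2).
have W_lb_gt0 : 0 < n%:R * (1 - eps).
  by rewrite mulr_gt0 ?ltr0n ?subr_gt0 ?(ltn_trans _ n_gt2).
have := PoA_ge_ratio lb_beta_gt0 lb_K_range (@lb_sigma_range R n) all_niche_in_profiles
  all_main_CCE W_lb_gt0 (fun s _ => welfare_ge s).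
rewrite /expect big_seq1 mul1r welfare_all_main; apply: le_trans.
have c2_gt0 : 0 < 2 * c + 1 by have := c_ge0; lra.
rewrite ler_pdivlMr ?mulr_gt0 ?ltr0n ?(ltn_trans _ n_gt2) //.
have -> : (c + 2 - eps) / (2 * c + 1) * (n%:R * (2 * c + 1)) = n%:R * (c + 2 - eps).
  by field; rewrite gt_eqF.
exact: welfare_all_niche_ge.
Qed.

End LowerBoundAnalysis.

Theorem theorem2 (R : realType) (beta : R) (n K : nat) :
  0 < beta <= 1 -> (2 < n)%N -> (1 <= K)%N -> (K <= n.-1)%N ->
  (K%:R : R) <= expR (1 / (5 * beta)) ->
  exists (d : nat) (G : game R n d),
    [/\ valid_game G, g_beta G = beta, g_K G = K &
        (n.-1)%:R / n%:R + 1 / (1 + 5 * beta * ln (K%:R : R)) < PoA G].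
Proof.
move=> /andP[beta_gt0 _] n_gt2 K_ge1 K_lt_n K_le_exp.
exists 1%N, (lb_game n K beta); split => //; first exact: lb_game_valid.
apply: lt_le_trans (PoA_lb_game_ge beta_gt0 n_gt2 K_ge1 K_lt_n).
have c_le : beta * ln K%:R <= 1 / 5.
  apply: (mul_ln_le beta_gt0); first by rewrite ltr0n.
  by apply: le_trans K_le_exp _; rewrite ler_expR !div1r invfM.
have -> : n.-1%:R = n%:R - 1 :> R by rewrite -subn1 natrB // (ltn_trans _ n_gt2).
have -> : eps R n = (n%:R + 1)^-1 by rewrite /eps -addn1 natrD.
rewrite -[5 * beta * _]mulrA.
by apply: PoA_bound_gap; rewrite ?c_ge0 ?ler_nat.
Qed.
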